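(* Let $T$ be a $K$-torus with minimal splitting field $L$, and let $0\to P\to Q\to T\to0$ be the canonical resolution, where $Q=R_{L/K}(T_L)/R^{(1)}_{L/K}(T_L)_{(u)}$ and $P=R^{(1)}_{L/K}(T_L)^{(m)}$. Then: (a) $H^1(I,X^*(Q))=0$; (b) the resolution induces an exact sequence of $\Gamma_k$-modules $0\to X_*(P)\to X_*(Q)_I\to X_*(T)_I\to0$ (where $X_*(P)=X_*(P)_I$ since $I$ acts trivially on $X_*(P)$).
   Context: $A$ is a complete discrete valuation ring with fraction field $K$ and perfect residue field $k$; $\mathcal G$ the absolute Galois group of $K$, $I$ its inertia subgroup, $\Gamma_k=\mathcal G/I$; $M_I$ denotes $I$-coinvariants. For a $K$-torus $T'$: $X^*(T')$, $X_*(T')$ its character and cocharacter modules; $T'^{(m)}$ is the $K$-torus with character module $X^*(T')^I$ (maximal quotient torus with multiplicative reduction) and $T'_{(u)}$ is the $K$-torus with character module $X^*(T')/X^*(T')^I$ (maximal subtorus with unipotent reduction), giving $0\to T'_{(u)}\to T'\to T'^{(m)}\to0$. $R_{L/K}$ is Weil restriction; $R^{(1)}_{L/K}(T_L)$ is the kernel of the norm epimorphism $R_{L/K}(T_L)\to T$. The map $P\to Q$ is induced by the inclusion $R^{(1)}_{L/K}(T_L)\hookrightarrow R_{L/K}(T_L)$ (pushout along $R^{(1)}_{L/K}(T_L)\to P$), and $Q\to T$ by the norm. *)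

(* K-tori are encoded through their character modules
   (anti-equivalence of K-tori with Galois lattices). *)
From HB Require Import structures.
From mathcomp Require Import all_boot all_order all_algebra all_fingroup.
Set Implicit Arguments. Unset Strict Implicit. Unset Printing Implicit Defensive.
Import GRing.Theory Num.Theory.
Local Open Scope ring_scope.

Section Generic.
Variables (gT : finGroupType) (V : zmodType).

Definition crossed_hom (I : {group gT}) (act : gT -> V -> V) (S : V -> Prop)
    (c : gT -> V) : Prop :=
  (forall g, g \in I -> S (c g)) /\
  (forall g h, g \in I -> h \in I -> c (g * h)%g = c g + act g (c h)).

Definition H1_vanishes (I : {group gT}) (act : gT -> V -> V) (S : V -> Prop) :=
  forall c, crossed_hom I act S c ->
    exists m, S m /\ forall g, g \in I -> c g = act g m - m.

(* Elements of the dual lattice Hom_Z(S, Z), represented by any function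
   V -> int which is additive on S (only its values on S matter). *)
Definition dual_on (S : V -> Prop) (phi : V -> int) : Prop :=
  forall a b, S a -> S b -> phi (a + b) = phi a + phi b.

Definition dact (act : gT -> V -> V) (g : gT) (phi : V -> int) : V -> int :=
  fun v => phi (act g^-1%g v).

Definition eq_on (S : V -> Prop) (phi psi : V -> int) : Prop :=
  forall v, S v -> phi v = psi v.

(* phi vanishes in the I-coinvariants of the dual Hom_Z(S,Z): phi lies in the
   span of the elements g.phi_i - phi_i with g \in I. *)
Definition coinv_zero (I : {group gT}) (act : gT -> V -> V) (S : V -> Prop)
    (phi : V -> int) : Prop :=
  exists (k : nat) (gs : nat -> gT) (phis : nat -> V -> int),
    (forall i, (i < k)%N -> gs i \in I /\ dual_on S (phis i)) /\
    (forall v, S v ->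
       phi v = \sum_(i < k) (dact act (gs i) (phis i) v - phis i v)).

End Generic.

Section Tori.
Variables (gT : finGroupType) (n : nat).
Local Notation X := 'rV[int]_n.

(* Character module of R_{L/K}(T_L): functions G -> X, (g.f)(h) = f(h g). *)
Definition IndX := {ffun gT -> X}.

Definition indAct (g : gT) (f : IndX) : IndX := [ffun h => f (h * g)%g].

(* Character map X*(T) -> X*(R_{L/K}(T_L)) dual to the norm. *)
Definition jX (actX : gT -> X -> X) (x : X) : IndX := [ffun h => actX h x].

(* Character module of Q = R_{L/K}(T_L) / R^(1)_{L/K}(T_L)_(u): the preimage
   in X*(R) of the I-invariants of X*(R^(1)) = X*(R) / jX(X). *)
Definition XQ (actX : gT -> X -> X) (I : {group gT}) (f : IndX) : Prop :=
  forall g, g \in I -> exists x, indAct g f - f = jX actX x.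

(* Cocharacters of P = R^(1)_{L/K}(T_L)^(m): Hom_Z(X*(Q)/jX(X), Z), seen in
   Hom_Z(X*(Q), Z) as the maps killing jX(X). *)
Definition XP_dual (actX : gT -> X -> X) (I : {group gT}) (psi : IndX -> int) :=
  dual_on (XQ actX I) psi /\ forall x, psi (jX actX x) = 0.

(* Cocharacter map X_*(Q) -> X_*(T) induced by the norm Q -> T. *)
Definition toXT (actX : gT -> X -> X) (phi : IndX -> int) : X -> int :=
  fun x => phi (jX actX x).

End Tori.

From HB Require Import structures.
From mathcomp Require Import all_boot all_order all_algebra all_fingroup.
From mathcomp Require Import ring.
Set Implicit Arguments.
Unset Strict Implicit.
Unset Printing Implicit Defensive.
Import GRing.Theory Num.Theory.
Local Open Scope ring_scope.

(* X*(R_{L/K}(T_L)) is the module induced from the trivial subgroup, so by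
   Shapiro's lemma its I-cocycles are all coboundaries.  Since I acts trivially
   on X*(Q) modulo jX(X), a cocycle c with values in X*(Q) is a homomorphism
   modulo jX(X); thus c(g) *+ #[g] lies in jX(X), and so does c(g) because
   jX(X) is saturated (f lies in it iff f(h) = h.f(1) for all h).  The
   primitive of c then lies in X*(Q), which is (a).  For (b), the norm element
   \sum_(j in I) j.v of v in X*(Q) is I-invariant and congruent to |I| v
   modulo jX(X); a cocharacter of P vanishing in the coinvariants kills it,
   hence kills v as Z is torsion-free.  Exactness in the middle and
   surjectivity come from pulling relations back along f |-> f(1), which
   splits jX. *)

Section CoinvariantDual.
Variables (gT : finGroupType) (V : zmodType) (I : {group gT}).
Variables (act : gT -> V -> V) (S : V -> Prop).

Lemma coinv_zero_of_eq0 (phi : V -> int) :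
  eq_on S phi (fun _ => 0) -> coinv_zero I act S phi.
Proof.
move=> phi0; exists 0%N, (fun _ => 1%g), (fun _ _ => 0); split=> // v Sv.
by rewrite big_ord0 phi0.
Qed.

Lemma coinv_zero_fixed (phi : V -> int) v :
  coinv_zero I act S phi -> S v -> (forall g, g \in I -> act g v = v) ->
  phi v = 0.
Proof.
move=> [k [gs [phis [gsI phiE]]]] Sv fix_v; rewrite phiE //; apply: big1 => i _.
by rewrite /dact fix_v ?subrr // groupV; have [] := gsI i (ltn_ord i).
Qed.

End CoinvariantDual.

Lemma rowv_mulrn_inj n (a b : 'rV[int]_n) k : (0 < k)%N -> a *+ k = b *+ k -> a = b.
Proof.
move=> k_gt0 eq_ab; apply/matrixP => i j.
have /eqP := congr1 (fun M : 'rV[int]_n => M i j) eq_ab.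
by rewrite !mulmxnE -subr_eq0 -mulrnBl mulrn_eq0 eqn0Ngt k_gt0 subr_eq0 => /eqP.
Qed.

Section InducedModule.
Variables (gT : finGroupType) (n : nat).
Local Notation Ind := (IndX gT n).

Lemma indAct_is_nmod_morphism g : nmod_morphism (@indAct gT n g).
Proof. by split=> [|f f']; apply/ffunP => h; rewrite !ffunE. Qed.

HB.instance Definition _ g :=
  GRing.isNmodMorphism.Build Ind Ind (@indAct gT n g) (indAct_is_nmod_morphism g).

Lemma indAct1 (f : Ind) : indAct 1%g f = f.
Proof. by apply/ffunP => h; rewrite !ffunE mulg1. Qed.

Lemma indActM g h (f : Ind) : indAct (g * h)%g f = indAct g (indAct h f).
Proof. by apply/ffunP => k; rewrite !ffunE mulgA. Qed.

Lemma indAct_orbit_sum_fixed (I : {group gT}) (f : Ind) g : g \in I ->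
  indAct g (\sum_(j in I) indAct j f) = \sum_(j in I) indAct j f.
Proof.
move=> gI; rewrite raddf_sum (reindex (fun j => g^-1 * j)%g) /=; last first.
  by exists (fun j => g * j)%g => j _; rewrite ?mulKVg ?mulKg.
apply: eq_big => [j | j _]; first by rewrite groupMl ?groupV.
by rewrite -indActM mulKVg.
Qed.

(* Shapiro's lemma: m(h) := c(s^-1 h)(s) with s the chosen representative of hI. *)
Lemma indAct_cocycle_coboundary (I : {group gT}) (c : gT -> Ind) :
  (forall g h, g \in I -> h \in I -> c (g * h)%g = c g + indAct g (c h)) ->
  exists m : Ind, forall g, g \in I -> indAct g m - m = c g.
Proof.
move=> c_cocycle.
exists [ffun h => c ((repr (h *: I)%g)^-1 * h)%g (repr (h *: I)%g)] => g gI.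
apply/ffunP => h; rewrite !ffunE lcosetM lcoset_id //.
set s := repr (h *: I)%g.
have sh_I : (s^-1 * h)%g \in I.
  have : s \in (h *: I)%g by apply: mem_repr (lcoset_refl I h).
  by rewrite mem_lcoset => /groupVr; rewrite invMg invgK.
by rewrite mulgA c_cocycle // !ffunE mulKVg addrC addKr.
Qed.

End InducedModule.

Section CanonicalResolution.
Variables (gT : finGroupType) (n : nat) (actX : gT -> 'rV[int]_n -> 'rV[int]_n).
Hypothesis actXD : forall g x y, actX g (x + y) = actX g x + actX g y.
Hypothesis actX1 : forall x, actX 1%g x = x.
Hypothesis actXM : forall g h x, actX (g * h)%g x = actX g (actX h x).
Local Notation X := 'rV[int]_n.
Local Notation Ind := (IndX gT n).
Local Notation jX := (jX actX).

Lemma actX_is_nmod_morphism g : nmod_morphism (actX g).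
Proof.
split=> [|x y]; last exact: actXD.
by apply: (addrI (actX g 0)); rewrite -actXD !addr0.
Qed.

HB.instance Definition _ g :=
  GRing.isNmodMorphism.Build X X (actX g) (actX_is_nmod_morphism g).

Lemma jX_is_nmod_morphism : nmod_morphism jX.
Proof. by split=> [|x y]; apply/ffunP => h; rewrite !ffunE ?raddf0 ?raddfD. Qed.

HB.instance Definition _ := GRing.isNmodMorphism.Build X Ind jX jX_is_nmod_morphism.

Lemma jX1 x : jX x 1%g = x.
Proof. by rewrite ffunE actX1. Qed.

Lemma indAct_jX g x : indAct g (jX x) = jX (actX g x).
Proof. by apply/ffunP => h; rewrite !ffunE actXM. Qed.

Lemma jX_saturated (f : Ind) k y : (0 < k)%N -> f *+ k = jX y -> f = jX (f 1%g).
Proof.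
move=> k_gt0 fk; have fk1 : f 1%g *+ k = y.
  by have := congr1 (fun F : Ind => F 1%g) fk; rewrite /= ffunMnE jX1.
apply/ffunP => h; rewrite ffunE; apply: (@rowv_mulrn_inj n _ _ k k_gt0).
by have := congr1 (fun F : Ind => F h) fk; rewrite /= ffunMnE ffunE -fk1 raddfMn.
Qed.

Variable I : {group gT}.
Local Notation XQ := (XQ actX I).

Lemma XQ_jX x : XQ (jX x).
Proof. by move=> g _; exists (actX g x - x); rewrite indAct_jX raddfB. Qed.

Lemma XQD f f' : XQ f -> XQ f' -> XQ (f + f').
Proof.
move=> Qf Qf' g gI; have [x ex] := Qf g gI; have [y ey] := Qf' g gI.
by exists (x + y); rewrite [RHS]raddfD /= -ex -ey raddfD opprD addrACA.
Qed.

Lemma XQ0 : XQ 0.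
Proof. by move=> g _; exists 0; rewrite !raddf0 addr0. Qed.

Lemma XQMn f k : XQ f -> XQ (f *+ k).
Proof.
move=> Qf; elim: k => [|k IHk]; first by rewrite mulr0n; apply: XQ0.
by rewrite mulrS; apply: XQD.
Qed.

Local Hint Resolve XQ_jX XQ0 XQMn : core.

Lemma XQ_indActE f g : XQ f -> g \in I -> indAct g f = f + jX ((indAct g f - f) 1%g).
Proof.
move=> Qf gI; have [x ex] := Qf g gI.
by rewrite ex jX1 -ex addrC subrK.
Qed.

Lemma dual_on_XQ_mulrn (psi : Ind -> int) f k :
  dual_on XQ psi -> XQ f -> psi (f *+ k) = psi f *+ k.
Proof.
move=> psi_add Qf; elim: k => [|k IHk].
  by rewrite !mulr0n; apply: (addrI (psi 0)); rewrite -psi_add ?addr0 //; apply: XQ0.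
by rewrite !mulrS psi_add ?IHk //; apply: XQMn.
Qed.

Section XQCocycle.
Variable c : gT -> Ind.
Hypothesis c_cocycle : crossed_hom I (@indAct gT n) XQ c.

Lemma XQ_cocycle1 : c 1%g = 0.
Proof.
have := c_cocycle.2 1%g 1%g (group1 I) (group1 I); rewrite mulg1 indAct1.
by move=> c11; apply: (addrI (c 1%g)); rewrite addr0 -c11.
Qed.

Lemma XQ_cocycle_expg g k : g \in I ->
  exists y, c (g ^+ k)%g = c g *+ k + jX y.
Proof.
move=> gI; elim: k => [|k [y IHk]].
  by exists 0; rewrite expg0 XQ_cocycle1 !raddf0 addr0.
have [z ez] := c_cocycle.1 g gI g gI; exists (z *+ k + actX g y).
have -> : c (g ^+ k.+1)%g = c g + indAct g (c g *+ k + jX y).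
  by rewrite expgS c_cocycle.2 ?groupX // IHk.
rewrite raddfD raddfMn /= indAct_jX -[indAct g (c g)](subrK (c g)) ez.
by rewrite raddfD raddfMn /= mulrnDl mulrS [jX z *+ k + _]addrC !addrA.
Qed.

Lemma XQ_cocycle_jX g : g \in I -> c g = jX (c g 1%g).
Proof.
move=> gI; have [y cy] := XQ_cocycle_expg #[g]%g gI.
apply: (jX_saturated (y := - y) (order_gt0 g)).
by rewrite raddfN /=; apply/eqP; rewrite -addr_eq0 -cy expg_order XQ_cocycle1.
Qed.

End XQCocycle.

Lemma H1_XQ_vanishes : H1_vanishes I (@indAct gT n) XQ.
Proof.
move=> c c_cocycle; have [m dm] := indAct_cocycle_coboundary c_cocycle.2.
exists m; split=> [g gI | g gI]; last by rewrite dm.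
by exists (c g 1%g); rewrite dm // -XQ_cocycle_jX.
Qed.

Lemma XQ_orbit_sum f : XQ f ->
  exists x, \sum_(j in I) indAct j f = f *+ #|I| + jX x.
Proof.
move=> Qf; exists (\sum_(j in I) (indAct j f - f) 1%g).
rewrite raddf_sum -sumr_const -big_split /=.
by apply: eq_bigr => j jI; apply: XQ_indActE.
Qed.

Lemma XP_dual_fixed psi g : XP_dual actX I psi -> g \in I ->
  eq_on XQ (dact (@indAct gT n) g psi) psi.
Proof.
move=> [psi_add psi_jX] gI f Qf.
by rewrite /dact XQ_indActE ?groupV // psi_add // psi_jX addr0.
Qed.

Lemma XP_dual_coinv_inj psi : XP_dual actX I psi ->
  coinv_zero I (@indAct gT n) XQ psi -> eq_on XQ psi (fun _ => 0).
Proof.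
move=> [psi_add psi_jX] psi_coinv f Qf; have [x ex] := XQ_orbit_sum Qf.
have Q_sum : XQ (\sum_(j in I) indAct j f) by rewrite ex; apply/XQD/XQ_jX/XQMn.
have : psi f *+ #|I| = 0.
  rewrite -dual_on_XQ_mulrn // -(coinv_zero_fixed psi_coinv Q_sum); last first.
    by move=> g; apply: indAct_orbit_sum_fixed.
  by rewrite ex psi_add ?psi_jX ?addr0 //; apply: XQMn.
by move/eqP; rewrite mulrn_eq0 eqn0Ngt cardG_gt0 => /eqP.
Qed.

Lemma toXT_dact phi g :
  toXT actX (dact (@indAct gT n) g phi) =1 dact actX g (toXT actX phi).
Proof. by move=> x; rewrite /toXT /dact indAct_jX. Qed.

Lemma toXT_coinv_zero phi : coinv_zero I (@indAct gT n) XQ phi ->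
  coinv_zero I actX (fun _ => True) (toXT actX phi).
Proof.
move=> [k [gs [phis [gs_phis phiE]]]].
exists k, gs, (fun i => toXT actX (phis i)); split=> [i ik | x _].
  have [gI phi_add] := gs_phis i ik; split=> // a b _ _.
  by rewrite /toXT raddfD /= phi_add.
by rewrite /toXT phiE //; apply: eq_bigr => i _; rewrite -toXT_dact.
Qed.

Lemma toXT_XP_dual_coinv_zero psi : XP_dual actX I psi ->
  coinv_zero I actX (fun _ => True) (toXT actX psi).
Proof. by move=> [_ psi_jX]; apply: coinv_zero_of_eq0 => x _; apply: psi_jX. Qed.

Lemma toXT_coinv_lift phi : dual_on XQ phi ->
  coinv_zero I actX (fun _ => True) (toXT actX phi) ->
  exists psi, XP_dual actX I psi /\
    coinv_zero I (@indAct gT n) XQ (fun f => phi f - psi f).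
Proof.
move=> phi_add [k [gs [alphas [gs_alphas phiE]]]].
pose beta i (f : Ind) := alphas i (f 1%g).
have beta_add i a b : (i < k)%N -> beta i (a + b) = beta i a + beta i b.
  by move=> ik; have [_ alpha_add] := gs_alphas i ik; rewrite /beta ffunE alpha_add.
pose coinv_rel f := \sum_(i < k) (dact (@indAct gT n) (gs i) (beta i) f - beta i f).
exists (fun f => phi f - coinv_rel f); split; last first.
  exists k, gs, beta; split=> [i ik | f _]; last by rewrite opprB addrC subrK.
  by have [gI _] := gs_alphas i ik; split=> // a b _ _; apply: beta_add.
split=> [a b Qa Qb | x].
  have rel_add : coinv_rel (a + b) = coinv_rel a + coinv_rel b.
    rewrite /coinv_rel -big_split; apply: eq_bigr => i _ /=.
    by rewrite /dact raddfD !beta_add //; ring.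
  by rewrite phi_add // rel_add; ring.
apply/eqP; rewrite subr_eq0 -/(toXT actX phi x) phiE //; apply/eqP.
by apply: eq_bigr => i _; rewrite /dact /beta indAct_jX !jX1.
Qed.

Lemma toXT_surjective alpha : dual_on (fun _ => True) alpha ->
  exists phi, dual_on XQ phi /\
    coinv_zero I actX (fun _ => True) (fun x => alpha x - toXT actX phi x).
Proof.
move=> alpha_add; exists (fun f : Ind => alpha (f 1%g)); split.
  by move=> a b _ _; rewrite ffunE alpha_add.
by apply: coinv_zero_of_eq0 => x _; rewrite /toXT jX1 subrr.
Qed.

End CanonicalResolution.

Theorem mainTheorem10 (gT : finGroupType) (I : {group gT}) (n : nat)
  (actX : gT -> 'rV[int]_n -> 'rV[int]_n)
  (* gT = Gal(L/K), I = inertia subgroup (normal), X*(T) = Z^n *)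
  (HI : (I <| [set: gT])%g)
  (Hadd : forall g x y, actX g (x + y) = actX g x + actX g y)
  (H1 : forall x, actX 1%g x = x)
  (HM : forall g h x, actX (g * h)%g x = actX g (actX h x))
  (* L is the minimal splitting field: Gal(L/K) acts faithfully *)
  (Hfaith : forall g, (forall x, actX g x = x) -> g = 1%g) :
  (* (a) H^1(I, X*(Q)) = 0 *)
  H1_vanishes I (@indAct gT n) (XQ actX I) /\
  (* (b) 0 -> X_*(P) -> X_*(Q)_I -> X_*(T)_I -> 0 exact, G-equivariant *)
  [/\ (* I acts trivially on X_*(P) *)
      (forall psi g, XP_dual actX I psi -> g \in I ->
         eq_on (XQ actX I) (dact (@indAct gT n) g psi) psi),
      (* X_*(P) -> X_*(Q)_I is injective *)
      (forall psi, XP_dual actX I psi ->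
         coinv_zero I (@indAct gT n) (XQ actX I) psi ->
         eq_on (XQ actX I) psi (fun _ => 0)),
      (* X_*(Q)_I -> X_*(T)_I is well defined and G-equivariant, and the
         composite X_*(P) -> X_*(T)_I is zero *)
      [/\ forall phi, dual_on (XQ actX I) phi ->
            coinv_zero I (@indAct gT n) (XQ actX I) phi ->
            coinv_zero I actX (fun _ => True) (toXT actX phi),
          forall phi g, dual_on (XQ actX I) phi ->
            toXT actX (dact (@indAct gT n) g phi) =1 dact actX g (toXT actX phi)
        & forall psi, XP_dual actX I psi ->
            coinv_zero I actX (fun _ => True) (toXT actX psi)],
      (* exactness at X_*(Q)_I *)
      (forall phi, dual_on (XQ actX I) phi ->
         coinv_zero I actX (fun _ => True) (toXT actX phi) ->
         exists psi, XP_dual actX I psi /\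
           coinv_zero I (@indAct gT n) (XQ actX I) (fun v => phi v - psi v))
    & (* X_*(Q)_I -> X_*(T)_I is surjective *)
      (forall alpha, dual_on (fun _ => True) alpha ->
         exists phi, dual_on (XQ actX I) phi /\
           coinv_zero I actX (fun _ => True)
             (fun x => alpha x - toXT actX phi x))].
Proof.
split; first exact: H1_XQ_vanishes.
split.
- exact: XP_dual_fixed.
- exact: XP_dual_coinv_inj.
- split=> [phi _ | phi g _ | psi].
  + exact: toXT_coinv_zero.
  + exact: toXT_dact.
  + exact: toXT_XP_dual_coinv_zero.
- exact: toXT_coinv_lift.
- exact: toXT_surjective.
Qed.
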